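(* Let $X=(X_n)_{n\in\mathbb{Z}}$ be a stationary sequence of integer-valued random variables. If almost surely $0$ has infinitely many ancestors in the record graph of $X$, then the record graph of $X$ is almost surely connected.
   Context: For a sequence $x=(x_n)_{n\in\mathbb{Z}}$, the record map is $R_x(i)=\inf\{n>i: \sum_{l=i}^{n-1}x_l\ge0\}$ if this set is nonempty, and $R_x(i)=i$ otherwise. The record graph has vertex set $\mathbb{Z}$ and a directed edge $i\to R_x(i)$ whenever $R_x(i)\ne i$; connectivity is in the undirected sense. An ancestor of order $n\ge1$ of $i$ is $R_x^n(i)$ when $R_x^n(i)\neq i$; ''infinitely many ancestors'' means $R^n_x(i)\ne i$ for all $n\ge1$ (equivalently $R^{n+1}_x(i)>R^n_x(i)$ for all $n\ge 0$). *)

From HB Require Import structures.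
From mathcomp Require Import all_boot all_order all_algebra.
From mathcomp Require Import all_classical all_reals all_analysis.
From Stdlib Require Import Relations.
Set Implicit Arguments. Unset Strict Implicit. Unset Printing Implicit Defensive.
Import Order.TTheory GRing.Theory Num.Theory.
Local Open Scope ring_scope.
Local Open Scope classical_set_scope.

(* Record map R_x(i) = inf { m > i : sum_{l=i}^{m-1} x_l >= 0 }, or i if empty.
   Writing m = i + n + 1 with n : nat, the condition is
   0 <= \sum_(l < n.+1) x (i + l). *)
Definition record_map (x : int -> int) (i : int) : int :=
  match pselect (exists n : nat, (0 <= \sum_(l < n.+1) x (i + (l : nat)%:Z))%R) with
  | left H => i + (ex_minn H).+1%:Z
  | right _ => i
  end.

Definition record_edge (x : int -> int) (u v : int) : Prop :=
  u <> v /\ record_map x u = v.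

Definition record_graph_connected (x : int -> int) : Prop :=
  forall u v : int, clos_refl_sym_trans int (record_edge x) u v.

(* i has infinitely many ancestors: R_x^n(i) <> i for all n >= 1. *)
Definition inf_ancestors (x : int -> int) (i : int) : Prop :=
  forall n : nat, (1 <= n)%N -> iter n (record_map x) i <> i.

Definition stationary d (T : measurableType d) (R : realType)
  (P : probability T R) (X : int -> T -> int) : Prop :=
  forall (s : seq (int * int)) (k : int),
    P [set w | all (fun p => X (p.1 + k) w == p.2) s]
    = P [set w | all (fun p => X p.1 w == p.2) s].

From HB Require Import structures.
From mathcomp Require Import all_boot all_order all_algebra.
From mathcomp Require Import all_classical all_reals all_analysis.
From mathcomp Require Import zify.
From Stdlib Require Import Relations.
Set Implicit Arguments. Unset Strict Implicit. Unset Printing Implicit Defensive.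
Import Order.TTheory GRing.Theory Num.Theory.
Local Open Scope ring_scope.
Local Open Scope classical_set_scope.

(* A vertex b is a fixed point of the record map exactly when all partial sums
   X_b + ... + X_(b+n) are negative.  This event is the decreasing intersection of
   events that depend on finitely many coordinates, so by stationarity its
   probability does not depend on b; at b = 0 it is null because 0 has an
   ancestor.  Hence almost surely the record map has no fixed point.
   For such a sequence, every j with i < j < R(i) satisfies j < R(j) <= R(i): the
   sum from i to j - 1 is negative while the sum from i to R(i) - 1 is not.  By
   induction on R(i) - j every such j is linked to R(i), and then by induction on
   v - u every vertex u is linked to every v >= u. *)

Definition psum (x : int -> int) (i : int) (n : nat) : int :=
  \sum_(l < n) x (i + (l : nat)%:Z).

Lemma psumD x i m n : psum x i (m + n) = psum x i m + psum x (i + m%:Z) n.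
Proof.
rewrite /psum big_split_ord /=; congr (_ + _); apply: eq_bigr => l _ /=.
by rewrite PoszD addrA.
Qed.

Variant record_map_spec (x : int -> int) (i : int) : int -> Prop :=
  | RecordMapFixed of (forall n, psum x i n.+1 < 0) : record_map_spec x i i
  | RecordMapNext (m : nat) of 0 <= psum x i m.+1
      & (forall k, (k < m)%N -> psum x i k.+1 < 0) :
      record_map_spec x i (i + m.+1%:Z).

Lemma record_mapP x i : record_map_spec x i (record_map x i).
Proof.
rewrite /record_map; case: pselect => [H|H].
  case: ex_minnP => m Pm minm; apply: RecordMapNext => // k km.
  by rewrite ltNge; apply: contraTN km => /minm; rewrite -leqNgt.
by apply: RecordMapFixed => n; rewrite ltNge; apply/negP => hn; apply: H; exists n.
Qed.

Lemma record_map_fixedE x i : record_map x i = i <-> forall n, psum x i n.+1 < 0.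
Proof.
case: record_mapP => [neg|m nonneg _]; first by [].
by split => [|/(_ m)]; [lia | rewrite ltNge nonneg].
Qed.

Lemma record_map_ge x i : i <= record_map x i.
Proof. by case: record_mapP => *; lia. Qed.

Lemma record_map_nested x a j :
  a < j < record_map x a -> j < record_map x j <= record_map x a.
Proof.
case: record_mapP => [_|m nonneg neg]; first lia.
move=> /andP[aj jR].
have [p jE] : exists p : nat, j = a + p%:Z by exists `|j - a|%N; lia.
subst j; have [p_gt0 p_le] : (0 < p)%N /\ (p <= m)%N by lia.
have head_neg : psum x a p < 0 by rewrite -(prednK p_gt0); apply: neg; lia.
have := psumD x a p (m - p).+1; rewrite addnS subnKC // => split_sum.
have tail_nonneg : 0 <= psum x (a + p%:Z) (m - p).+1 by lia.
case: record_mapP => [/(_ (m - p)%N)|m' _ neg']; first lia.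
have : ~~ (m - p < m')%N by apply/negP => /neg'; lia.
lia.
Qed.

Section record_graph_connectivity.
Variable x : int -> int.
Hypothesis record_map_moves : forall i, record_map x i <> i.
Local Notation R := (record_map x).
Local Notation linked := (clos_refl_sym_trans int (record_edge x)).

Lemma record_map_gt i : i < R i.
Proof. by have := record_map_ge x i; have := @record_map_moves i; lia. Qed.

Lemma linked_record_map i : linked i (R i).
Proof. by apply: rst_step; split; first exact/nesym/record_map_moves. Qed.

Lemma linked_below_record_map a j : a < j < R a -> linked j (R a).
Proof.
have [n] := ubnP `|R a - j|%N; elim: n j => // n IH j lt_n ajR.
have /andP[jRj RjRa] := record_map_nested ajR.
have [<-|RjRa'] := eqVneq (R j) (R a); first exact: linked_record_map.
apply: rst_trans (linked_record_map j) (IH _ _ _); lia.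
Qed.

Lemma linked_le u v : u <= v -> linked u v.
Proof.
have [n] := ubnP `|v - u|%N; elim: n u => // n IH u lt_n uv.
have uRu := record_map_gt u; case: (ltrP (R u) v) => [Ruv|vRu].
  by apply: rst_trans (linked_record_map u) (IH _ _ _); lia.
have [->|vRu'] := eqVneq v (R u); first exact: linked_record_map.
have [<-|uv'] := eqVneq u v; first exact: rst_refl.
apply: rst_trans (linked_record_map u) _; apply: rst_sym.
by apply: linked_below_record_map; lia.
Qed.

Lemma no_fixpoint_record_graph_connected : record_graph_connected x.
Proof.
move=> u v; case: (lerP u v) => [/linked_le //|/ltW/linked_le].
exact: rst_sym.
Qed.

End record_graph_connectivity.

Section countable_preimage.
Context d (T : measurableType d) (C : countType).
Implicit Types (f g : T -> C) (A : set C).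

Lemma pickle_fiber_setI A j : A `&` [set c | pickle c = j] =
  if pickle_inv j is Some c then A `&` [set c] else set0.
Proof.
apply/seteqP; split => c /=.
  by move=> [Ac <-]; rewrite pickleK_inv.
case e: pickle_inv => [c'|//] [Ac cc']; split => //=.
by have := pickle_invK (T := C) j; rewrite e cc'.
Qed.

Lemma preimage_bigcup_pickle f A :
  f @^-1` A = \bigcup_j f @^-1` (A `&` [set c | pickle c = j]).
Proof. by apply/seteqP; split => [w Afw|w [j _ []//]]; exists (pickle (f w)). Qed.

Lemma preimage_countable_measurable f :
  (forall c, measurable (f @^-1` [set c])) -> forall A, measurable (f @^-1` A).
Proof.
move=> mf A; rewrite preimage_bigcup_pickle; apply: bigcupT_measurable => j.
rewrite pickle_fiber_setI; case: pickle_inv => [c|]; rewrite ?setI1;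
  [case: ifP => _|]; rewrite ?preimage_set0 //; exact: mf.
Qed.

Lemma measure_preimage_countable (R : realType) (mu : {measure set T -> \bar R}) f g :
  (forall c, measurable (f @^-1` [set c])) ->
  (forall c, measurable (g @^-1` [set c])) ->
  (forall c, mu (f @^-1` [set c]) = mu (g @^-1` [set c])) ->
  forall A, mu (f @^-1` A) = mu (g @^-1` A).
Proof.
move=> mf mg fg A; rewrite !preimage_bigcup_pickle.
have fibers_disjoint h : trivIset setT (fun j => h @^-1` (A `&` [set c | pickle c = j])).
  by move=> i j _ _ [w [[_ <-] [_ <-]]].
rewrite !measure_bigcup //; try by move=> j _; apply: preimage_countable_measurable.
apply: eq_eseriesr => j _; rewrite !pickle_fiber_setI.
case: pickle_inv => [c|]; rewrite ?setI1; [case: ifP => _|];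
  rewrite ?preimage_set0 //; exact: fg.
Qed.

Lemma ae_forall_countable (R : realType) (mu : {measure set T -> \bar R})
    (Q : C -> T -> Prop) :
  (forall c, \forall w \ae mu, Q c w) -> \forall w \ae mu, forall c, Q c w.
Proof.
move=> hQ; have : \forall w \ae mu, forall n c, pickle c = n -> Q c w.
  apply: ae_foralln => n; case e: (pickle_inv n) => [c|].
    move: (hQ c); apply: filterS => w Qcw c' c'n.
    by move: e; rewrite -c'n pickleK_inv => -[->].
  by apply: aeW => w c cn; rewrite -cn pickleK_inv in e.
by apply: filterS => w h c; exact: h _ c erefl.
Qed.

End countable_preimage.

Section stationary_windows.
Context d (T : measurableType d) (R : realType) (P : probability T R)
  (X : int -> T -> int).
Hypothesis mX : forall n k, measurable (X n @^-1` [set k]).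
Hypothesis hstat : stationary P X.

Definition window (b : int) (n : nat) (w : T) : seq int :=
  mkseq (fun i => X (i%:Z + b) w) n.

Definition cylinder (b : int) (t : seq int) : set T :=
  [set w | all (fun p => X (p.1 + b) w == p.2) (zip (mkseq Posz (size t)) t)].

Lemma all_zip_eqE b w (s : seq nat) t : size s = size t ->
  all (fun p => X (p.1 + b) w == p.2) (zip [seq i%:Z | i <- s] t) =
  ([seq X (i%:Z + b) w | i <- s] == t).
Proof. by elim: s t => [|i s IH] [|k t] //= [/IH ->]; rewrite eqseq_cons. Qed.

Lemma window_preimage1 b n t :
  window b n @^-1` [set t] = if size t == n then cylinder b t else set0.
Proof.
apply/seteqP; split => w /=.
  by move=> <-; rewrite size_mkseq eqxx /cylinder /= size_mkseq all_zip_eqE ?size_map.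
by case: eqP => [<-|//]; rewrite /cylinder /= all_zip_eqE ?size_iota // => /eqP.
Qed.

Lemma measurable_all_eq b (s : seq (int * int)) :
  measurable [set w | all (fun p => X (p.1 + b) w == p.2) s].
Proof.
elim: s => [|[i k] s IH] /=.
  by rewrite (_ : [set w | true] = setT) //; apply/seteqP.
rewrite (_ : [set w | _ && _] = X (i + b) @^-1` [set k] `&`
    [set w | all (fun p => X (p.1 + b) w == p.2) s]).
  exact: measurableI (mX _ _) IH.
by apply/seteqP; split => w /=; [case/andP => /eqP|case=> /eqP -> ->].
Qed.

Lemma cylinder_shift b t : P (cylinder b t) = P (cylinder 0 t).
Proof. exact: etrans (hstat _ b) (esym (hstat _ 0)). Qed.

Lemma measurable_window b n A : measurable (window b n @^-1` A).
Proof.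
apply: preimage_countable_measurable => t; rewrite window_preimage1.
by case: ifP => _; [exact: measurable_all_eq | exact: measurable0].
Qed.

Lemma window_shift b n A : P (window b n @^-1` A) = P (window 0 n @^-1` A).
Proof.
apply: measure_preimage_countable => t; rewrite ?window_preimage1;
  case: ifP => _ //; [exact: measurable_all_eq.. | exact: cylinder_shift].
Qed.

Definition record_fixed_event (b : int) : set T :=
  [set w | record_map (X^~ w) b = b].

Definition negative_prefix_event (b : int) (N : nat) : set T :=
  [set w | forall m, (m <= N)%N -> psum (X^~ w) b m.+1 < 0].

Lemma negative_prefix_eventE b N : negative_prefix_event b N =
  window b N.+1 @^-1` [set t | forall m, (m <= N)%N -> \sum_(l < m.+1) t`_l < 0].
Proof.
apply/seteqP; split => w /=;
  have E m : (m <= N)%N ->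
      \sum_(l < m.+1) (window b N.+1 w)`_l = psum (X^~ w) b m.+1
    by move=> mN; apply: eq_bigr => l _; rewrite nth_mkseq 1?addrC //;
      have := ltn_ord l; lia.
- by move=> neg m mN; rewrite E //; exact: neg.
- by move=> neg m mN; rewrite -E //; exact: neg.
Qed.

Lemma measurable_negative_prefix_event b N : measurable (negative_prefix_event b N).
Proof. by rewrite negative_prefix_eventE; exact: measurable_window. Qed.

Lemma record_fixed_eventE b : record_fixed_event b = \bigcap_N negative_prefix_event b N.
Proof.
apply/seteqP; split => w /= => [/record_map_fixedE neg N _ m _|neg]; first exact: neg.
by apply/record_map_fixedE => k; exact: (neg k).
Qed.

Lemma measurable_record_fixed_event b : measurable (record_fixed_event b).
Proof.
by rewrite record_fixed_eventE; apply: bigcapT_measurable => N;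
  exact: measurable_negative_prefix_event.
Qed.

Lemma record_fixed_event_shift b : P (record_fixed_event b) = P (record_fixed_event 0).
Proof.
have cvgP c : P \o negative_prefix_event c @ \oo --> P (record_fixed_event c).
  rewrite record_fixed_eventE; apply: nonincreasing_cvg_mu.
  - by rewrite (le_lt_trans (probability_le1 _ _)) ?ltey //;
      exact: measurable_negative_prefix_event.
  - exact: measurable_negative_prefix_event.
  - by rewrite -record_fixed_eventE; exact: measurable_record_fixed_event.
  - move=> N M NM; rewrite subsetEset => w neg m mM; apply: neg.
    exact: leq_trans mM NM.
have shift : P \o negative_prefix_event b = P \o negative_prefix_event 0.
  by apply/funext => N /=; rewrite !negative_prefix_eventE window_shift.
have := cvgP b; rewrite shift => cvg0b.
exact: (cvg_unique (@ereal_hausdorff R) cvg0b (cvgP 0)).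
Qed.

End stationary_windows.

Theorem lemma3p4 (d : measure_display) (T : measurableType d) (R : realType)
  (P : probability T R) (X : int -> T -> int)
  (hX : forall (n k : int), measurable (X n @^-1` [set k]))
  (hstat : stationary P X)
  (hanc : {ae P, forall w, inf_ancestors (fun n => X n w) 0}) :
  {ae P, forall w, record_graph_connected (fun n => X n w)}.
Proof.
have fixed0 : P (record_fixed_event X 0) = 0.
  apply/(negligibleP _ (measurable_record_fixed_event hX 0)).
  by apply: negligibleS hanc => w /= fixed anc; exact: anc 1%N isT fixed.
have : {ae P, forall w b, record_map (X^~ w) b <> b}.
  apply: ae_forall_countable => b; exists (record_fixed_event X b); split.
  - exact: measurable_record_fixed_event.
  - exact: etrans (record_fixed_event_shift hX hstat b) fixed0.
  - by move=> w /= /contrapT.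
by apply: filterS => w; exact: no_fixpoint_record_graph_connected.
Qed.
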